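(* Fix $p\in(0,1)$ and let $P_n$ be the number of distinct directed source-to-sink paths in a random series-parallel network of size $n$ in the Bernoulli model with parameter $p$. Then $\mathbb{E}(P_1)=1$ and for $n\ge2$ $$\mathbb{E}(P_n)=\frac{2p}{n-1}\sum_{k=1}^{n-1}\mathbb{E}(P_k)+\frac{1-p}{n-1}\sum_{k=1}^{n-1}\mathbb{E}(P_k)\mathbb{E}(P_{n-k}),$$ and the generating function $E(z)=\sum_{n\ge1}\mathbb{E}(P_n)z^{n-1}$ is $$E(z)=\begin{cases}\dfrac{1-2p}{(1-p)(1-z)-p(1-z)^{2p}}, & p\neq\tfrac12,\\[2mm] \dfrac{2}{2(1-z)-(1-z)\log\frac{1}{1-z}}, & p=\tfrac12.\end{cases}$$
   Context: Bernoulli model of series-parallel networks with parameter $p\in(0,1)$: at step $1$ the network is a single edge from the source to the sink; at step $n>1$ one of the $n-1$ edges $(x,y)$ is chosen uniformly at random and with probability $p$ a parallel edge $(x,y)$ is added, with probability $1-p$ the edge is subdivided by a new vertex $z$ into $(x,z),(z,y)$. Size $n$ means the network after step $n$ ($n$ edges). Paths are directed paths following edge orientation (towards the sink). *)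

From Stdlib Require Import Reals List Arith.
Import ListNotations.
Open Scope R_scope.

(* A network is a list of directed edges (x,y) (a multigraph; order irrelevant).
   Source = vertex 0, sink = vertex 1.  The vertex created at step m gets label m. *)
Definition network := list (nat * nat).

Definition net1 : network := [(0%nat, 1%nat)].

Definition grow (g : network) (k : nat) (par : bool) (z : nat) : network :=
  let e := nth k g (0%nat, 1%nat) in
  if par then e :: g
  else (fst e, z) :: (z, snd e) :: (firstn k g ++ skipn (S k) g).

(* Exact distribution of the network of size m+1: list of (probability, network). *)
Fixpoint netdist (p : R) (m : nat) : list (R * network) :=
  match m with
  | O => [(1, net1)]
  | S m' =>
      flat_map (fun qg : R * network =>
        let (q, g) := qg in
        flat_map (fun k : nat =>
          [ (q * / INR (S m') * p, grow g k true (S (S m')));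
            (q * / INR (S m') * (1 - p), grow g k false (S (S m'))) ])
          (seq 0 (S m')))
        (netdist p m')
  end.

(* Number of directed paths from v to the sink (vertex 1) using at most fuel edges;
   parallel edges yield distinct paths. *)
Fixpoint npaths (fuel : nat) (v : nat) (g : network) : nat :=
  if Nat.eqb v 1 then 1%nat else
  match fuel with
  | O => 0%nat
  | S f => fold_right (fun e acc =>
             if Nat.eqb (fst e) v then (npaths f (snd e) g + acc)%nat else acc) 0%nat g
  end.

(* Number of source-to-sink paths (a path uses at most |g| edges). *)
Definition P (g : network) : nat := npaths (length g) 0 g.

(* E(P_n) for n >= 1 (size-n network is netdist p (n-1)). *)
Definition EP (p : R) (n : nat) : R :=
  fold_right (fun qg acc => fst qg * INR (P (snd qg)) + acc) 0 (netdist p (n - 1)).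

Definition Egf (p z : R) : R :=
  if Req_EM_T p (1/2) then
    2 / (2 * (1 - z) - (1 - z) * ln (1 / (1 - z)))
  else
    (1 - 2 * p) / ((1 - p) * (1 - z) - p * Rpower (1 - z) (2 * p)).

(* A series-parallel network is described by its decomposition tree: the
   leaves are the edges, the inner nodes are parallel or series compositions,
   and the number of source-to-sink paths is the sum (parallel) or the product
   (series) of the counts of the two parts.  Growing the network at a uniformly
   chosen edge is growing the tree at a uniformly chosen leaf, and for this
   leaf-growth process the root split is uniform and, given the split, the two
   subtrees are independent copies of the process (as for random binary search
   trees).  Conditioning on the root gives the recurrence for E(P_n).  In terms
   of E(z) the recurrence reads E' = 2p E / (1 - z) + (1 - p) E^2, and for the
   denominator D of the claimed closed form, (E D - D(0)) exp(-(1 - p) \int E)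
   has derivative zero. *)

From Stdlib Require Import Reals List Arith Lia Lra Permutation.
From Coquelicot Require Import Coquelicot.
Import ListNotations.
Open Scope R_scope.

(** * Finite distributions *)

Definition expect {X : Type} (D : list (R * X)) (f : X -> R) : R :=
  fold_right (fun qx acc => fst qx * f (snd qx) + acc) 0 D.

Definition lsum (l : list nat) (f : nat -> R) : R :=
  fold_right (fun k acc => f k + acc) 0 l.

Lemma expect_app {X : Type} (D1 D2 : list (R * X)) f :
  expect (D1 ++ D2) f = expect D1 f + expect D2 f.
Proof. induction D1 as [|x D1 IH]; simpl; [ring | rewrite IH; ring]. Qed.

Lemma expect_ext_in {X : Type} (D : list (R * X)) f g :
  (forall qx, In qx D -> f (snd qx) = g (snd qx)) -> expect D f = expect D g.
Proof.
  induction D as [|x D IH]; intros H; simpl; [reflexivity|].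
  rewrite H by now left. rewrite IH; [reflexivity|].
  intros; apply H; now right.
Qed.

Lemma expect_plus {X : Type} (D : list (R * X)) f g :
  expect D (fun x => f x + g x) = expect D f + expect D g.
Proof. induction D as [|x D IH]; simpl; [ring | rewrite IH; ring]. Qed.

Lemma expect_scal {X : Type} (D : list (R * X)) c f : expect D (fun x => c * f x) = c * expect D f.
Proof. induction D as [|x D IH]; simpl; [ring | rewrite IH; ring]. Qed.

Lemma expect_swap {X Y : Type} (D1 : list (R * X)) (D2 : list (R * Y)) f :
  expect D1 (fun a => expect D2 (fun b => f a b)) = expect D2 (fun b => expect D1 (fun a => f a b)).
Proof.
  induction D1 as [|x D1 IH]; simpl.
  - induction D2 as [|y D2 IH2]; simpl; [reflexivity | rewrite <- IH2; ring].
  - rewrite IH, <- expect_scal, <- expect_plus. reflexivity.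
Qed.

Lemma expect_flat_map {X Y : Type} (D : list (R * X)) (K : R -> X -> list (R * Y)) F G :
  (forall q x, expect (K q x) F = q * G x) ->
  expect (flat_map (fun qx : R * X => let (q, x) := qx in K q x) D) F = expect D G.
Proof.
  intros H. induction D as [|[q x] D IH]; [reflexivity|].
  simpl flat_map. rewrite expect_app, IH, H. reflexivity.
Qed.

Lemma lsum_app l1 l2 f : lsum (l1 ++ l2) f = lsum l1 f + lsum l2 f.
Proof. induction l1 as [|x l1 IH]; simpl; [ring | rewrite IH; ring]. Qed.

Lemma lsum_ext_in l f g : (forall k, In k l -> f k = g k) -> lsum l f = lsum l g.
Proof.
  induction l as [|x l IH]; intros H; simpl; [reflexivity|].
  rewrite H by now left. rewrite IH; [reflexivity|].
  intros; apply H; now right.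
Qed.

Lemma lsum_plus l f g : lsum l (fun k => f k + g k) = lsum l f + lsum l g.
Proof. induction l as [|x l IH]; simpl; [ring | rewrite IH; ring]. Qed.

Lemma lsum_scal l c f : lsum l (fun k => c * f k) = c * lsum l f.
Proof. induction l as [|x l IH]; simpl; [ring | rewrite IH; ring]. Qed.

Lemma lsum_map l g f : lsum (map g l) f = lsum l (fun k => f (g k)).
Proof. induction l as [|x l IH]; simpl; [ring | rewrite IH; ring]. Qed.

Lemma lsum_perm l l' f : Permutation l l' -> lsum l f = lsum l' f.
Proof. induction 1; simpl; [reflexivity | rewrite IHPermutation | ring | congruence]; ring. Qed.

Lemma lsum_bounds l f B :
  (forall k, In k l -> 0 <= f k <= B) -> 0 <= lsum l f <= INR (length l) * B.
Proof.
  induction l as [|x l IH]; intros H; [simpl; lra|].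
  cbn [length]. rewrite S_INR. simpl lsum.
  destruct (H x) as [Hx1 Hx2]; [now left|].
  destruct IH as [Hl1 Hl2]; [intros; apply H; now right|].
  lra.
Qed.

Lemma lsum_seq_last n f : lsum (seq 0 (S n)) f = lsum (seq 0 n) f + f n.
Proof. rewrite seq_S, lsum_app. simpl. ring. Qed.

Lemma lsum_seq_shift s n f : lsum (seq (S s) n) f = lsum (seq s n) (fun k => f (S k)).
Proof. rewrite <- seq_shift, lsum_map. reflexivity. Qed.

Lemma lsum_seq_first n f : lsum (seq 0 (S n)) f = f 0%nat + lsum (seq 0 n) (fun k => f (S k)).
Proof. simpl. rewrite lsum_seq_shift. reflexivity. Qed.

Lemma lsum_seq_rev n f : lsum (seq 0 (S n)) (fun k => f (n - k)%nat) = lsum (seq 0 (S n)) f.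
Proof.
  induction n as [|n IH]; [reflexivity|].
  rewrite lsum_seq_first, (lsum_seq_last (S n) f), <- IH, Nat.sub_0_r.
  simpl Nat.sub. ring.
Qed.

Lemma lsum_seq_offset s n f : lsum (seq s n) f = lsum (seq 0 n) (fun j => f (s + j)%nat).
Proof.
  revert f; induction s as [|s IH]; intros f; [reflexivity|].
  rewrite lsum_seq_shift, IH. reflexivity.
Qed.

Lemma lsum_seq_split k l f :
  lsum (seq 0 (k + l)) f = lsum (seq 0 k) f + lsum (seq 0 l) (fun j => f (k + j)%nat).
Proof. rewrite seq_app, lsum_app, (lsum_seq_offset (0 + k)). reflexivity. Qed.

Lemma lsum_const n c : lsum (seq 0 n) (fun _ => c) = INR n * c.
Proof.
  induction n as [|n IH]; [simpl; ring|].
  rewrite lsum_seq_last, IH, S_INR. ring.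
Qed.

Lemma sum_f_R0_lsum f m : sum_f_R0 f m = lsum (seq 0 (S m)) f.
Proof.
  induction m as [|m IH]; [simpl; ring|].
  rewrite lsum_seq_last. simpl sum_f_R0. rewrite IH. reflexivity.
Qed.

Lemma expect_flat_map_pair {Y : Type} (l : list nat) (a b : nat -> R) (A B : nat -> Y) F :
  expect (flat_map (fun k => [(a k, A k); (b k, B k)]) l) F
  = lsum l (fun k => a k * F (A k) + b k * F (B k)).
Proof. induction l as [|x l IH]; simpl; [reflexivity | rewrite IH; ring]. Qed.

(** * Growth processes *)

(* [grow n x k par] grows the object [x] of size [n] at position [k < n]:
   [par] (probability [p]) doubles that edge, otherwise it is subdivided.
   [process m] is the exact distribution after [m] steps, shaped as [netdist]. *)
Section GrowthProcess.
Variable X : Type.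
Variable p : R.
Variable start : X.
Variable grow : nat -> X -> nat -> bool -> X.

Fixpoint process (m : nat) : list (R * X) :=
  match m with
  | O => [(1, start)]
  | S m' =>
      flat_map (fun qx : R * X =>
        let (q, x) := qx in
        flat_map (fun k : nat =>
          [ (q * / INR (S m') * p, grow (S m') x k true);
            (q * / INR (S m') * (1 - p), grow (S m') x k false) ])
          (seq 0 (S m')))
        (process m')
  end.

Definition grow_mean (n : nat) (F : X -> R) (x : X) : R :=
  / INR n * lsum (seq 0 n) (fun k => p * F (grow n x k true) + (1 - p) * F (grow n x k false)).

Lemma grow_mean_comb n a F b G x :
  grow_mean n (fun y => a * F y + b * G y) x = a * grow_mean n F x + b * grow_mean n G x.
Proof.
  unfold grow_mean.
  rewrite (lsum_ext_in _ _ (fun k => a * (p * F (grow n x k true) + (1 - p) * F (grow n x k false))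
                                  + b * (p * G (grow n x k true) + (1 - p) * G (grow n x k false))))
    by (intros; ring).
  rewrite lsum_plus, !lsum_scal. ring.
Qed.

Lemma expect_process_S m F : expect (process (S m)) F = expect (process m) (grow_mean (S m) F).
Proof.
  apply expect_flat_map. intros q x.
  rewrite expect_flat_map_pair. unfold grow_mean.
  rewrite <- !lsum_scal. apply lsum_ext_in. intros; ring.
Qed.

Lemma process_mass m : expect (process m) (fun _ => 1) = 1.
Proof.
  induction m as [|m IH]; [simpl; ring|].
  rewrite expect_process_S. transitivity (expect (process m) (fun _ => 1)); [|exact IH].
  apply expect_ext_in. intros qx _.
  unfold grow_mean. rewrite lsum_const. field. apply not_0_INR. lia.
Qed.

Lemma process_invariant (Inv : nat -> X -> Prop) :
  Inv 1%nat start ->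
  (forall n x k b, Inv n x -> (k < n)%nat -> Inv (S n) (grow n x k b)) ->
  forall m qx, In qx (process m) -> Inv (S m) (snd qx).
Proof.
  intros H0 Hstep m. induction m as [|m IH]; intros qx H.
  - destruct H as [<- | []]. exact H0.
  - apply in_flat_map in H as [[q x] [Hx H]].
    apply in_flat_map in H as [k [Hk H]]. apply in_seq in Hk.
    specialize (IH _ Hx). simpl in IH.
    destruct H as [<- | [<- | []]]; apply Hstep; auto; lia.
Qed.

End GrowthProcess.

Arguments process {X}.
Arguments grow_mean {X}.

Lemma expect_process_lump {X Y : Type} p (x0 : X) (y0 : Y) growX growY (f : X -> Y)
  (Inv : nat -> X -> Prop) :
  f x0 = y0 -> Inv 1%nat x0 ->
  (forall n x k b, Inv n x -> (k < n)%nat -> Inv (S n) (growX n x k b)) ->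
  (forall n x F, Inv n x ->
     grow_mean p growX n (fun x => F (f x)) x = grow_mean p growY n F (f x)) ->
  forall m F, expect (process p x0 growX m) (fun x => F (f x)) = expect (process p y0 growY m) F.
Proof.
  intros H0 Inv0 Hstep Hmean m. induction m as [|m IH]; intros F.
  - simpl. rewrite H0. reflexivity.
  - rewrite !expect_process_S, <- IH. apply expect_ext_in. intros qx Hqx.
    apply Hmean. exact (process_invariant _ _ _ _ Inv Inv0 Hstep m qx Hqx).
Qed.

(** * Decomposition trees *)

(* [Node true] is a parallel and [Node false] a series composition. *)
Inductive sptree := Leaf | Node (par : bool) (a b : sptree).

Fixpoint leaves (t : sptree) : nat :=
  match t with Leaf => 1 | Node _ a b => leaves a + leaves b end.

Fixpoint tpaths (t : sptree) : nat :=
  match t with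
  | Leaf => 1
  | Node true a b => tpaths a + tpaths b
  | Node false a b => tpaths a * tpaths b
  end.

Fixpoint tgrow (t : sptree) (j : nat) (par : bool) : sptree :=
  match t with
  | Leaf => Node par Leaf Leaf
  | Node c u v =>
      if Nat.ltb j (leaves u) then Node c (tgrow u j par) v
      else Node c u (tgrow v (j - leaves u) par)
  end.

Definition tree_grow (n : nat) (t : sptree) (j : nat) (par : bool) : sptree := tgrow t j par.

Definition tree_dist (p : R) (m : nat) : list (R * sptree) := process p Leaf tree_grow m.

Definition root_mean (p : R) (F : sptree -> R) (a b : sptree) : R :=
  p * F (Node true a b) + (1 - p) * F (Node false a b).

Definition split_mean (p : R) (k l : nat) (G : sptree -> sptree -> R) : R :=
  expect (tree_dist p k) (fun a => expect (tree_dist p l) (fun b => G a b)).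

Lemma leaves_pos t : (0 < leaves t)%nat.
Proof. induction t; simpl; lia. Qed.

Lemma leaves_tgrow t j b : leaves (tgrow t j b) = S (leaves t).
Proof.
  revert j; induction t as [|c u IHu v IHv]; intros j; simpl; [reflexivity|].
  destruct (Nat.ltb j (leaves u)); simpl; [rewrite IHu | rewrite IHv]; lia.
Qed.

Lemma tree_dist_leaves p m qt : In qt (tree_dist p m) -> leaves (snd qt) = S m.
Proof.
  apply (process_invariant _ p Leaf tree_grow (fun n t => leaves t = n)); [reflexivity|].
  intros n t k b <- _. apply leaves_tgrow.
Qed.

Lemma tree_dist_S p m F :
  expect (tree_dist p (S m)) F = expect (tree_dist p m) (grow_mean p tree_grow (S m) F).
Proof. apply expect_process_S. Qed.

Lemma tree_dist_mass p m : expect (tree_dist p m) (fun _ => 1) = 1.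
Proof. apply process_mass. Qed.

Lemma tgrow_node_l c a b j par :
  (j < leaves a)%nat -> tgrow (Node c a b) j par = Node c (tgrow a j par) b.
Proof. intros Hj. simpl. apply Nat.ltb_lt in Hj. rewrite Hj. reflexivity. Qed.

Lemma tgrow_node_r c a b j par :
  tgrow (Node c a b) (leaves a + j) par = Node c a (tgrow b j par).
Proof.
  simpl. replace (Nat.ltb (leaves a + j) (leaves a)) with false
    by (symmetry; apply Nat.ltb_ge; lia).
  do 2 f_equal. lia.
Qed.

Lemma grow_mean_node p F c a b :
  grow_mean p tree_grow (leaves a + leaves b) F (Node c a b) =
  / INR (leaves a + leaves b) *
   (INR (leaves a) * grow_mean p tree_grow (leaves a) (fun a' => F (Node c a' b)) a
  + INR (leaves b) * grow_mean p tree_grow (leaves b) (fun b' => F (Node c a b')) b).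
Proof.
  assert (Ha : INR (leaves a) <> 0) by (apply not_0_INR; pose proof (leaves_pos a); lia).
  assert (Hb : INR (leaves b) <> 0) by (apply not_0_INR; pose proof (leaves_pos b); lia).
  assert (Hab : INR (leaves a + leaves b) <> 0)
    by (apply not_0_INR; pose proof (leaves_pos a); lia).
  unfold grow_mean, tree_grow. rewrite lsum_seq_split.
  rewrite (lsum_ext_in (seq 0 (leaves a)) _
    (fun j => p * F (Node c (tgrow a j true) b) + (1 - p) * F (Node c (tgrow a j false) b))).
  2:{ intros j Hj. apply in_seq in Hj. rewrite !tgrow_node_l by lia. reflexivity. }
  rewrite (lsum_ext_in (seq 0 (leaves b)) _
    (fun j => p * F (Node c a (tgrow b j true)) + (1 - p) * F (Node c a (tgrow b j false)))).
  2:{ intros j _. rewrite !tgrow_node_r. reflexivity. }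
  field. auto.
Qed.

Lemma root_mean_grow_mean p F a b :
  root_mean p (grow_mean p tree_grow (leaves a + leaves b) F) a b =
  / INR (leaves a + leaves b) *
   (INR (leaves a) * grow_mean p tree_grow (leaves a) (fun a' => root_mean p F a' b) a
  + INR (leaves b) * grow_mean p tree_grow (leaves b) (fun b' => root_mean p F a b') b).
Proof.
  unfold root_mean at 1. rewrite !grow_mean_node.
  unfold root_mean. rewrite !grow_mean_comb. ring.
Qed.

Lemma split_mean_grow_l p k l G :
  split_mean p (S k) l G = expect (tree_dist p k) (fun a => expect (tree_dist p l)
                             (fun b => grow_mean p tree_grow (S k) (fun a' => G a' b) a)).
Proof.
  unfold split_mean. rewrite expect_swap, (expect_swap (tree_dist p k)).
  apply expect_ext_in. intros qb _. apply tree_dist_S.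
Qed.

Lemma split_mean_grow_r p k l G :
  split_mean p k (S l) G = expect (tree_dist p k) (fun a => expect (tree_dist p l)
                             (fun b => grow_mean p tree_grow (S l) (fun b' => G a b') b)).
Proof. apply expect_ext_in. intros qa _. apply tree_dist_S. Qed.

Lemma split_mean_root_grow p n k F : (k <= n)%nat ->
  split_mean p k (n - k) (root_mean p (grow_mean p tree_grow (S (S n)) F)) =
  / INR (S (S n)) * (INR (S k) * split_mean p (S k) (n - k) (root_mean p F)
                    + INR (S (n - k)) * split_mean p k (S (n - k)) (root_mean p F)).
Proof.
  intros Hk. rewrite split_mean_grow_l, split_mean_grow_r. unfold split_mean.
  rewrite (expect_ext_in (tree_dist p k) _ (fun a => / INR (S (S n)) *
    (INR (S k) * expect (tree_dist p (n - k))
       (fun b => grow_mean p tree_grow (S k) (fun a' => root_mean p F a' b) a)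
   + INR (S (n - k)) * expect (tree_dist p (n - k))
       (fun b => grow_mean p tree_grow (S (n - k)) (fun b' => root_mean p F a b') b)))).
  - rewrite expect_scal, expect_plus, !expect_scal. reflexivity.
  - intros [qa a] Ha. apply tree_dist_leaves in Ha. cbn [snd] in Ha |- *.
    rewrite <- !expect_scal, <- expect_plus, <- expect_scal.
    apply expect_ext_in. intros [qb b] Hb. apply tree_dist_leaves in Hb. cbn [snd] in Hb |- *.
    replace (S (S n)) with (leaves a + leaves b)%nat by lia.
    rewrite root_mean_grow_mean, Ha, Hb. reflexivity.
Qed.

Lemma lsum_seq_weights n (beta : nat -> R) :
  lsum (seq 0 n) (fun k => INR (S k) * beta (S k) + INR (n - k) * beta k)
  = INR n * lsum (seq 0 (S n)) beta.
Proof.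
  rewrite lsum_plus.
  replace (lsum (seq 0 n) (fun k => INR (S k) * beta (S k)))
    with (lsum (seq 0 (S n)) (fun k => INR k * beta k))
    by (rewrite lsum_seq_first; change (INR 0) with 0; ring).
  replace (lsum (seq 0 n) (fun k => INR (n - k) * beta k))
    with (lsum (seq 0 (S n)) (fun k => INR (n - k) * beta k))
    by (rewrite lsum_seq_last, Nat.sub_diag; change (INR 0) with 0; ring).
  rewrite <- lsum_plus, <- lsum_scal. apply lsum_ext_in.
  intros k Hk. apply in_seq in Hk.
  rewrite <- Rmult_plus_distr_r, <- plus_INR. do 3 f_equal. lia.
Qed.

(* The random-BST property of leaf growth: the root split is uniform and, given
   the split, the two subtrees are independent growth processes. *)
Lemma tree_dist_root_split p n F :
  expect (tree_dist p (S n)) F =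
  / INR (S n) * lsum (seq 0 (S n)) (fun k => split_mean p k (n - k) (root_mean p F)).
Proof.
  revert F; induction n as [|n IH]; intros F.
  - rewrite tree_dist_S. unfold split_mean, grow_mean, root_mean. simpl. field.
  - rewrite tree_dist_S, IH.
    set (beta := fun k => split_mean p k (S n - k) (root_mean p F)).
    rewrite (lsum_ext_in _ _
      (fun k => / INR (S (S n)) * (INR (S k) * beta (S k) + INR (S n - k) * beta k))).
    + rewrite lsum_scal, lsum_seq_weights. field. split; apply not_0_INR; lia.
    + intros k Hk. apply in_seq in Hk. rewrite split_mean_root_grow by lia.
      unfold beta. replace (S n - k)%nat with (S (n - k)) by lia. reflexivity.
Qed.

Definition tree_mean (p : R) (m : nat) : R := expect (tree_dist p m) (fun t => INR (tpaths t)).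

Lemma split_mean_tpaths p k l :
  split_mean p k l (root_mean p (fun t => INR (tpaths t)))
  = p * (tree_mean p k + tree_mean p l) + (1 - p) * (tree_mean p k * tree_mean p l).
Proof.
  unfold split_mean, root_mean, tree_mean.
  set (ml := expect (tree_dist p l) (fun t => INR (tpaths t))).
  transitivity (expect (tree_dist p k) (fun a => (p + (1 - p) * ml) * INR (tpaths a) + p * ml * 1)).
  - apply expect_ext_in. intros [qa a] _. cbn [snd].
    rewrite (expect_ext_in _ _
      (fun b => p * INR (tpaths a) * 1 + (p + (1 - p) * INR (tpaths a)) * INR (tpaths b)))
      by (intros; cbn [tpaths]; rewrite plus_INR, mult_INR; ring).
    rewrite expect_plus, !expect_scal, tree_dist_mass. fold ml. ring.
  - rewrite expect_plus, !expect_scal, tree_dist_mass. ring.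
Qed.

Lemma tree_mean_0 p : tree_mean p 0 = 1.
Proof. unfold tree_mean. simpl. ring. Qed.

Lemma tree_mean_rec p n :
  tree_mean p (S n) = / INR (S n) * (2 * p * lsum (seq 0 (S n)) (tree_mean p)
        + (1 - p) * lsum (seq 0 (S n)) (fun k => tree_mean p k * tree_mean p (n - k))).
Proof.
  unfold tree_mean at 1. rewrite tree_dist_root_split.
  rewrite (lsum_ext_in _ _ (fun k => p * tree_mean p k + p * tree_mean p (n - k)
                                     + (1 - p) * (tree_mean p k * tree_mean p (n - k))))
    by (intros; rewrite split_mean_tpaths; ring).
  rewrite !lsum_plus, !lsum_scal, (lsum_seq_rev n (tree_mean p)). ring.
Qed.

(** * Path counts of realizations *)

Definition verts (s : network) : list nat := flat_map (fun e => [fst e; snd e]) s.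

(* [s] lists the edges of a network with terminals [x], [y] in the leaf order
   of its decomposition tree [t]. *)
Inductive realizes : sptree -> nat -> nat -> network -> Prop :=
| realizes_leaf x y : x <> y -> realizes Leaf x y [(x, y)]
| realizes_par a b x y sa sb :
    realizes a x y sa -> realizes b x y sb ->
    (forall v, In v (verts sa) -> In v (verts sb) -> v = x \/ v = y) ->
    realizes (Node true a b) x y (sa ++ sb)
| realizes_ser a b x z y sa sb :
    realizes a x z sa -> realizes b z y sb ->
    (forall v, In v (verts sa) -> In v (verts sb) -> v = z) ->
    realizes (Node false a b) x y (sa ++ sb).

Lemma in_verts_app s1 s2 v : In v (verts (s1 ++ s2)) <-> In v (verts s1) \/ In v (verts s2).
Proof. unfold verts. rewrite flat_map_app, in_app_iff. tauto. Qed.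

Lemma in_fst_verts v s : In v (map fst s) -> In v (verts s).
Proof.
  intros H. apply in_map_iff in H as [e [<- He]].
  apply in_flat_map. exists e. split; [exact He | now left].
Qed.

Lemma in_snd_verts v s : In v (map snd s) -> In v (verts s).
Proof.
  intros H. apply in_map_iff in H as [e [<- He]].
  apply in_flat_map. exists e. split; [exact He | right; now left].
Qed.

Lemma verts_incl s1 s2 : incl s1 s2 -> incl (verts s1) (verts s2).
Proof.
  intros Hi v H. apply in_flat_map in H as [e [He Hv]].
  apply in_flat_map. exists e. auto.
Qed.

Lemma realizes_props t x y s : realizes t x y s ->
  x <> y /\ In x (verts s) /\ In y (verts s) /\ ~ In y (map fst s) /\ length s = leaves t.
Proof.
  induction 1 as [x y Hxy | a b x y sa sb _ IHa _ IHb Hd | a b x z y sa sb _ IHa _ IHb Hd];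
    rewrite ?map_app, ?in_app_iff, ?in_verts_app, ?length_app.
  - simpl. intuition.
  - destruct IHa as [Hxy [Hx [Hy [Hs Hl]]]], IHb as [_ [_ [_ [Hs' Hl']]]].
    simpl. intuition.
  - destruct IHa as [Hxz [Hx [Hz [Hs Hl]]]], IHb as [Hzy [Hz' [Hy [Hs' Hl']]]].
    assert (y <> x) by (intros ->; apply Hxz, Hd; auto).
    assert (~ In y (map fst sa)) by (intros Hya; apply Hzy, eq_sym, Hd; auto using in_fst_verts).
    simpl. intuition.
Qed.

Lemma realizes_length t x y s : realizes t x y s -> length s = leaves t.
Proof. intros H. apply (realizes_props _ _ _ _ H). Qed.

Definition out_paths (h : network) (f v : nat) (s : network) : nat :=
  fold_right (fun e acc => if Nat.eqb (fst e) v then (npaths f (snd e) h + acc)%nat else acc)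
             0%nat s.

Lemma npaths_S f v h : npaths (S f) v h = if Nat.eqb v 1 then 1%nat else out_paths h f v h.
Proof. reflexivity. Qed.

Lemma out_paths_app h f v s1 s2 :
  out_paths h f v (s1 ++ s2) = (out_paths h f v s1 + out_paths h f v s2)%nat.
Proof.
  induction s1 as [|e s1 IH]; simpl; [reflexivity|].
  unfold out_paths in *. destruct (Nat.eqb (fst e) v); rewrite IH; lia.
Qed.

Lemma out_paths_notin h f v s : ~ In v (map fst s) -> out_paths h f v s = 0%nat.
Proof.
  induction s as [|e s IH]; intros H; [reflexivity|].
  unfold out_paths in *. simpl in H |- *.
  destruct (Nat.eqb_spec (fst e) v); [tauto|]. apply IH. tauto.
Qed.

Definition interior_free (l r s : network) (x y : nat) : Prop :=
  forall v, In v (verts s) -> v <> x -> v <> y -> ~ In v (map fst (l ++ r)) /\ v <> 1%nat.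

Lemma interior_free_piece l o r s s' x y x' y' :
  interior_free l r s x y -> incl (verts s') (verts s) ->
  (forall v, In v (verts s') -> v <> x' -> v <> y' -> v <> x /\ v <> y /\ ~ In v (verts o)) ->
  interior_free l (o ++ r) s' x' y' /\ interior_free (l ++ o) r s' x' y'.
Proof.
  intros H Hs Ht. unfold interior_free in *. rewrite <- app_assoc. split;
  intros v Hv Hx Hy; destruct (Ht v Hv Hx Hy) as [Hvx [Hvy Ho]];
  destruct (H v (Hs v Hv) Hvx Hvy) as [H1 H2]; split; auto;
  rewrite !map_app, !in_app_iff; rewrite map_app, in_app_iff in H1;
  intros [Hl | [Hm | Hr]]; auto using in_fst_verts.
Qed.

(* The fuel of [npaths] only has to exceed [leaves t], which bounds the length
   of a path through [s]. *)
Definition counts_paths (t : sptree) (x y : nat) (s : network) : Prop :=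
  forall h l r, h = l ++ s ++ r -> interior_free l r s x y ->
  forall K c, (forall g, (K <= g)%nat -> npaths g y h = c) ->
  forall f, (leaves t - 1 + K <= f)%nat -> out_paths h f x s = (tpaths t * c)%nat.

Lemma counts_paths_par a b x y sa sb :
  (forall v, In v (verts sa) -> In v (verts sb) -> v = x \/ v = y) ->
  counts_paths a x y sa -> counts_paths b x y sb -> counts_paths (Node true a b) x y (sa ++ sb).
Proof.
  intros Hd IHa IHb h l r Hh Hint K c Hc f Hf. cbn [leaves tpaths] in Hf |- *.
  destruct (interior_free_piece l sb r _ sa x y x y Hint)
    as [Hinta _]; [intros v; rewrite in_verts_app; tauto | |].
  { intros v Hv Hx Hy. repeat split; auto. intros Hb. destruct (Hd v); auto. }
  destruct (interior_free_piece l sa r _ sb x y x y Hint)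
    as [_ Hintb]; [intros v; rewrite in_verts_app; tauto | |].
  { intros v Hv Hx Hy. repeat split; auto. intros Ha. destruct (Hd v); auto. }
  assert (Hh1 : h = l ++ sa ++ sb ++ r) by (rewrite Hh, <- app_assoc; reflexivity).
  assert (Hh2 : h = (l ++ sa) ++ sb ++ r) by (rewrite Hh1, <- app_assoc; reflexivity).
  rewrite out_paths_app, (IHa h l (sb ++ r) Hh1 Hinta K c Hc f),
    (IHb h (l ++ sa) r Hh2 Hintb K c Hc f) by lia.
  lia.
Qed.

Lemma counts_paths_ser a b x z y sa sb :
  realizes a x z sa -> realizes b z y sb ->
  (forall v, In v (verts sa) -> In v (verts sb) -> v = z) ->
  counts_paths a x z sa -> counts_paths b z y sb -> counts_paths (Node false a b) x y (sa ++ sb).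
Proof.
  intros Ra Rb Hd IHa IHb h l r Hh Hint K c Hc f Hf. cbn [leaves tpaths] in Hf |- *.
  destruct (realizes_props _ _ _ _ Ra) as [Hxz [Hx [Hz [Hzsa Hla]]]].
  destruct (realizes_props _ _ _ _ Rb) as [Hzy [Hz' [Hy _]]].
  pose proof (leaves_pos a). pose proof (leaves_pos b).
  destruct (interior_free_piece l sb r _ sa x y x z Hint)
    as [Hinta _]; [intros v; rewrite in_verts_app; tauto | |].
  { intros v Hv Hvx Hvz. split; [exact Hvx | split].
    - intros ->. apply Hvz, Hd; auto.
    - intros Hb. apply Hvz, Hd; auto. }
  destruct (interior_free_piece l sa r _ sb x y z y Hint)
    as [_ Hintb]; [intros v; rewrite in_verts_app; tauto | |].
  { intros v Hv Hvz Hvy. split; [| split; [exact Hvy |]].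
    - intros ->. apply Hvz, Hd; auto.
    - intros Ha. apply Hvz, Hd; auto. }
  destruct (Hint z) as [Hzlr Hz1]; [apply in_verts_app; auto | auto | auto |].
  assert (Hh1 : h = l ++ sa ++ sb ++ r) by (rewrite Hh, <- app_assoc; reflexivity).
  assert (Hh2 : h = (l ++ sa) ++ sb ++ r) by (rewrite Hh1, <- app_assoc; reflexivity).
  assert (Hmid : forall g, (leaves b + K <= g)%nat -> npaths g z h = (tpaths b * c)%nat).
  { intros [|g] Hg; [lia|].
    rewrite npaths_S. apply Nat.eqb_neq in Hz1. rewrite Hz1.
    rewrite Hh2 at 2. rewrite map_app, in_app_iff in Hzlr.
    rewrite !out_paths_app, (out_paths_notin h g z l), (out_paths_notin h g z sa),
      (out_paths_notin h g z r), (IHb h (l ++ sa) r Hh2 Hintb K c Hc g) by (tauto || lia).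
    lia. }
  rewrite out_paths_app, (out_paths_notin h f x sb),
    (IHa h l (sb ++ r) Hh1 Hinta (leaves b + K)%nat (tpaths b * c)%nat Hmid f)
    by (lia || (intros Hxb; apply Hxz, Hd; auto using in_fst_verts)).
  lia.
Qed.

Lemma realizes_counts_paths t x y s : realizes t x y s -> counts_paths t x y s.
Proof.
  induction 1 as [x y _ | a b x y sa sb _ IHa _ IHb Hd | a b x z y sa sb Ra IHa Rb IHb Hd].
  - intros h l r _ _ K c Hc f Hf. unfold out_paths. simpl.
    rewrite Nat.eqb_refl, Hc by (simpl in Hf; lia). lia.
  - apply counts_paths_par; assumption.
  - apply (counts_paths_ser a b x z y); assumption.
Qed.

Lemma realizes_npaths t h : realizes t 0 1 h -> npaths (length h) 0 h = tpaths t.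
Proof.
  intros R. rewrite (realizes_length _ _ _ _ R).
  pose proof (leaves_pos t). destruct (leaves t) as [|f] eqn:E; [lia|].
  rewrite npaths_S. simpl Nat.eqb. cbv iota.
  rewrite (realizes_counts_paths _ _ _ _ R h [] []) with (K := 0%nat) (c := 1%nat).
  - lia.
  - rewrite app_nil_r. reflexivity.
  - intros v _ _ Hv. split; auto.
  - intros [|g] _; reflexivity.
  - lia.
Qed.

(** * Coupling networks with trees *)

Definition expand_edge (h : network) (j : nat) (par : bool) (z : nat) : network :=
  let e := nth j h (0%nat, 1%nat) in
  firstn j h ++ (if par then [e; e] else [(fst e, z); (z, snd e)]) ++ skipn (S j) h.

Lemma expand_edge_app_l s1 s2 j b z : (j < length s1)%nat ->
  expand_edge (s1 ++ s2) j b z = expand_edge s1 j b z ++ s2.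
Proof.
  intros Hj. unfold expand_edge.
  rewrite firstn_app, skipn_app, app_nth1 by lia.
  replace (j - length s1)%nat with 0%nat by lia.
  replace (S j - length s1)%nat with 0%nat by lia.
  simpl. rewrite !app_nil_r, <- !app_assoc. reflexivity.
Qed.

Lemma expand_edge_app_r s1 s2 j b z : (length s1 <= j)%nat ->
  expand_edge (s1 ++ s2) j b z = s1 ++ expand_edge s2 (j - length s1) b z.
Proof.
  intros Hj. unfold expand_edge.
  rewrite firstn_app, skipn_app, app_nth2, firstn_all2, (skipn_all2 s1) by lia.
  replace (S j - length s1)%nat with (S (j - length s1)) by lia.
  simpl. rewrite <- !app_assoc. reflexivity.
Qed.

Lemma verts_expand_edge s j b z v : (j < length s)%nat ->
  In v (verts (expand_edge s j b z)) -> v = z \/ In v (verts s).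
Proof.
  intros Hj H. unfold expand_edge in H.
  assert (He : In (nth j s (0%nat, 1%nat)) s) by (apply nth_In; exact Hj).
  rewrite !in_verts_app in H. destruct H as [H | [H | H]].
  - right. revert H. apply verts_incl. intros e He'.
    rewrite <- (firstn_skipn j s). apply in_or_app. now left.
  - assert (Hf : In (fst (nth j s (0%nat, 1%nat))) (verts s)) by apply in_fst_verts, in_map, He.
    assert (Hs : In (snd (nth j s (0%nat, 1%nat))) (verts s)) by apply in_snd_verts, in_map, He.
    destruct b; simpl in H; repeat destruct H as [<- | H]; intuition.
  - right. revert H. apply verts_incl. intros e He'.
    rewrite <- (firstn_skipn (S j) s). apply in_or_app. now right.
Qed.

Lemma disjoint_expand_l (P : nat -> Prop) sa sb j b z :
  (j < length sa)%nat -> ~ In z (verts sb) ->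
  (forall v, In v (verts sa) -> In v (verts sb) -> P v) ->
  forall v, In v (verts (expand_edge sa j b z)) -> In v (verts sb) -> P v.
Proof.
  intros Hj Hz Hd v Hv Hvb. destruct (verts_expand_edge _ _ _ _ _ Hj Hv) as [-> | Hva]; auto.
  contradiction.
Qed.

Lemma disjoint_expand_r (P : nat -> Prop) sa sb j b z :
  (j < length sb)%nat -> ~ In z (verts sa) ->
  (forall v, In v (verts sa) -> In v (verts sb) -> P v) ->
  forall v, In v (verts sa) -> In v (verts (expand_edge sb j b z)) -> P v.
Proof.
  intros Hj Hz Hd v Hva Hv. destruct (verts_expand_edge _ _ _ _ _ Hj Hv) as [-> | Hvb]; auto.
  contradiction.
Qed.

Lemma realizes_tgrow t x y s j b z : realizes t x y s -> (j < leaves t)%nat ->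
  ~ In z (verts s) -> realizes (tgrow t j b) x y (expand_edge s j b z).
Proof.
  intros R. revert j.
  induction R as [x y Hxy | a c x y sa sb Ra IHa Rc IHc Hd | a c x w y sa sb Ra IHa Rc IHc Hd];
    intros j Hj Hz.
  - simpl in Hj. replace j with 0%nat by lia.
    assert (Hzx : z <> x) by (intros ->; apply Hz; simpl; auto).
    assert (Hzy : z <> y) by (intros ->; apply Hz; simpl; auto).
    destruct b.
    + apply (realizes_par Leaf Leaf x y [(x, y)] [(x, y)]); try (constructor; assumption).
      simpl. intros v [<- | [<- | []]] _; auto.
    + apply (realizes_ser Leaf Leaf x z y [(x, z)] [(z, y)]); try (constructor; auto).
      simpl. intros v [<- | [<- | []]] [H' | [H' | []]]; congruence.
  - rewrite in_verts_app in Hz. simpl in Hj |- *.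
    rewrite <- (realizes_length _ _ _ _ Ra), <- (realizes_length _ _ _ _ Rc) in *.
    destruct (Nat.ltb_spec j (length sa)).
    + rewrite expand_edge_app_l by assumption.
      constructor; auto. apply disjoint_expand_l; tauto.
    + rewrite expand_edge_app_r by assumption.
      constructor;
        [auto | apply IHc; [lia | tauto] | apply disjoint_expand_r; [lia | tauto | auto]].
  - rewrite in_verts_app in Hz. simpl in Hj |- *.
    rewrite <- (realizes_length _ _ _ _ Ra), <- (realizes_length _ _ _ _ Rc) in *.
    destruct (Nat.ltb_spec j (length sa)).
    + rewrite expand_edge_app_l by assumption.
      apply (realizes_ser _ _ x w y); auto. apply disjoint_expand_l; tauto.
    + rewrite expand_edge_app_r by assumption.
      apply (realizes_ser _ _ x w y);
        [auto | apply IHc; [lia | tauto] | apply disjoint_expand_r; [lia | tauto | auto]].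
Qed.

Definition bump (j l : nat) : nat := if Nat.ltb l j then l else S l.

Definition pos_grow (pos : list nat) (k j : nat) (par : bool) : list nat :=
  if par then j :: map (bump j) pos
  else j :: S j :: map (bump j) (firstn k pos ++ skipn (S k) pos).

Lemma seq_split_at j n : (j < n)%nat -> seq 0 n = seq 0 j ++ j :: seq (S j) (n - S j).
Proof.
  intros H. replace n with (j + S (n - S j))%nat at 1 by lia.
  rewrite seq_app. reflexivity.
Qed.

Lemma map_bump_seq_lo j n : (n <= j)%nat -> map (bump j) (seq 0 n) = seq 0 n.
Proof.
  intros H. rewrite <- map_id. apply map_ext_in. intros l Hl. apply in_seq in Hl.
  unfold bump. destruct (Nat.ltb_spec l j); [reflexivity | lia].
Qed.

Lemma map_bump_seq_hi j s n : (j <= s)%nat -> map (bump j) (seq s n) = seq (S s) n.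
Proof.
  intros H. rewrite <- seq_shift. apply map_ext_in. intros l Hl. apply in_seq in Hl.
  unfold bump. destruct (Nat.ltb_spec l j); [lia | reflexivity].
Qed.

Lemma firstn_nth_skipn {A : Type} (l : list A) k d : (k < length l)%nat ->
  l = firstn k l ++ nth k l d :: skipn (S k) l.
Proof.
  revert k; induction l as [|x l IH]; intros k Hk; simpl in Hk; [lia|].
  destruct k as [|k]; [reflexivity|]. simpl. f_equal. apply IH. lia.
Qed.

Lemma map_nth_seq {A : Type} (l : list A) d : map (fun k => nth k l d) (seq 0 (length l)) = l.
Proof.
  induction l as [|x l IH]; [reflexivity|].
  simpl. f_equal. rewrite <- seq_shift, map_map. exact IH.
Qed.

Lemma perm_seq_lt pos n l : Permutation pos (seq 0 n) -> In l pos -> (l < n)%nat.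
Proof. intros Hp Hl. apply (Permutation_in _ Hp), in_seq in Hl. lia. Qed.

Lemma pos_grow_perm pos n k b : Permutation pos (seq 0 n) -> (k < n)%nat ->
  Permutation (pos_grow pos k (nth k pos 0%nat) b) (seq 0 (S n)).
Proof.
  intros Hp Hk. set (j := nth k pos 0%nat).
  assert (Hlen : length pos = n) by (rewrite (Permutation_length Hp), length_seq; reflexivity).
  assert (Hj : (j < n)%nat) by (apply (perm_seq_lt pos), nth_In; [exact Hp | lia]).
  assert (Hseq : seq 0 (S n) = seq 0 j ++ j :: S j :: seq (S (S j)) (n - S j)).
  { rewrite (seq_split_at j (S n)) by lia. replace (S n - S j)%nat with (S (n - S j)) by lia.
    reflexivity. }
  assert (Hbump : map (bump j) (seq 0 j ++ seq (S j) (n - S j))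
                  = seq 0 j ++ seq (S (S j)) (n - S j)).
  { rewrite map_app, map_bump_seq_lo, map_bump_seq_hi by lia. reflexivity. }
  unfold pos_grow. rewrite Hseq. destruct b.
  - rewrite (seq_split_at j n Hj) in Hp.
    apply (Permutation_map (bump j)) in Hp.
    rewrite map_app in Hp. cbn [map] in Hp. rewrite map_bump_seq_lo, map_bump_seq_hi in Hp by lia.
    replace (bump j j) with (S j) in Hp by (unfold bump; rewrite Nat.ltb_irrefl; reflexivity).
    rewrite (perm_skip j Hp). apply Permutation_middle.
  - assert (Hrest : Permutation (firstn k pos ++ skipn (S k) pos)
                                (seq 0 j ++ seq (S j) (n - S j))).
    { apply (Permutation_app_inv _ _ _ _ j).
      rewrite <- seq_split_at by lia. unfold j. rewrite <- firstn_nth_skipn by lia. exact Hp. }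
    apply (Permutation_map (bump j)) in Hrest. rewrite Hbump in Hrest.
    rewrite (perm_skip j (perm_skip (S j) Hrest)).
    etransitivity; [apply perm_skip, Permutation_middle | apply Permutation_middle].
Qed.

Lemma expand_edge_nth h j b z : (j < length h)%nat ->
  nth j (expand_edge h j b z) (0%nat, 1%nat) =
  (if b then nth j h (0%nat, 1%nat) else (fst (nth j h (0%nat, 1%nat)), z)) /\
  nth (S j) (expand_edge h j b z) (0%nat, 1%nat) =
  (if b then nth j h (0%nat, 1%nat) else (z, snd (nth j h (0%nat, 1%nat)))).
Proof.
  intros Hj. unfold expand_edge.
  rewrite !(app_nth2 (firstn j h)), length_firstn by (rewrite length_firstn; lia).
  replace (j - Nat.min j (length h))%nat with 0%nat by lia.
  replace (S j - Nat.min j (length h))%nat with 1%nat by lia.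
  destruct b; split; reflexivity.
Qed.

Lemma expand_edge_nth_bump h j b z l : (j < length h)%nat -> (l < length h)%nat -> l <> j ->
  nth (bump j l) (expand_edge h j b z) (0%nat, 1%nat) = nth l h (0%nat, 1%nat).
Proof.
  intros Hj Hl Hlj. unfold bump, expand_edge. destruct (Nat.ltb_spec l j).
  - rewrite app_nth1 by (rewrite length_firstn; lia).
    rewrite nth_firstn. destruct (Nat.ltb_spec l j); [reflexivity | lia].
  - rewrite app_nth2 by (rewrite length_firstn; lia). rewrite length_firstn.
    replace (S l - Nat.min j (length h))%nat with (S (S (l - S j))) by lia.
    transitivity (nth (l - S j) (skipn (S j) h) (0%nat, 1%nat)); [destruct b; reflexivity|].
    rewrite nth_skipn. f_equal. lia.
Qed.

Lemma grow_expand_edge g h pos k b z :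
  Permutation pos (seq 0 (length h)) -> (k < length h)%nat ->
  g = map (fun l => nth l h (0%nat, 1%nat)) pos ->
  grow g k b z = map (fun l => nth l (expand_edge h (nth k pos 0%nat) b z) (0%nat, 1%nat))
                     (pos_grow pos k (nth k pos 0%nat) b).
Proof.
  intros Hp Hk Hg. set (j := nth k pos 0%nat).
  assert (Hlen : length pos = length h)
    by (rewrite (Permutation_length Hp), length_seq; reflexivity).
  assert (Hj : (j < length h)%nat) by (apply (perm_seq_lt pos), nth_In; [exact Hp | lia]).
  assert (Hek : nth k g (0%nat, 1%nat) = nth j h (0%nat, 1%nat)).
  { rewrite Hg, (nth_indep _ _ ((fun l => nth l h (0%nat, 1%nat)) 0%nat))
      by (rewrite length_map; lia).
    exact (map_nth (fun l => nth l h (0%nat, 1%nat)) pos 0%nat k). }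
  assert (Hother : forall l, In l pos -> l <> j ->
            nth (bump j l) (expand_edge h j b z) (0%nat, 1%nat) = nth l h (0%nat, 1%nat))
    by (intros l Hl Hlj; apply expand_edge_nth_bump; auto; apply (perm_seq_lt pos); auto).
  destruct (expand_edge_nth h j b z Hj) as [Hnj HnSj].
  unfold pos_grow, grow. rewrite Hek. fold j.
  destruct b; cbn [map]; rewrite Hnj.
  - f_equal. rewrite map_map, Hg. apply map_ext_in. intros l Hl.
    destruct (Nat.eq_dec l j) as [-> | Hne]; [| symmetry; auto].
    unfold bump. rewrite Nat.ltb_irrefl. exact (eq_sym HnSj).
  - rewrite HnSj. do 2 f_equal.
    assert (HND : NoDup pos) by (eapply Permutation_NoDup; [symmetry; exact Hp | apply seq_NoDup]).
    rewrite (firstn_nth_skipn pos k 0%nat) in HND by lia. fold j in HND.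
    rewrite map_map, Hg, firstn_map, skipn_map, <- map_app.
    apply map_ext_in. intros l Hl. symmetry. apply Hother.
    + rewrite (firstn_nth_skipn pos k 0%nat) by lia. apply in_app_iff in Hl.
      apply in_app_iff. simpl. tauto.
    + intros ->. apply (NoDup_remove_2 _ _ _ HND Hl).
Qed.

(* [cs_edges] lists the edges of [cs_net] in the leaf order of [cs_tree]:
   edge [k] of [cs_net] is edge [nth k cs_pos] of [cs_edges]. *)
Record coupled_state := CoupledState {
  cs_net : network;
  cs_edges : network;
  cs_tree : sptree;
  cs_pos : list nat }.

Definition coupled_grow (n : nat) (s : coupled_state) (k : nat) (par : bool) : coupled_state :=
  let j := nth k (cs_pos s) 0%nat in
  CoupledState (grow (cs_net s) k par (S n)) (expand_edge (cs_edges s) j par (S n))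
               (tgrow (cs_tree s) j par) (pos_grow (cs_pos s) k j par).

Definition coupled_start : coupled_state := CoupledState net1 net1 Leaf [0%nat].

Record coupled (n : nat) (s : coupled_state) : Prop := {
  coupled_perm : Permutation (cs_pos s) (seq 0 n);
  coupled_net : cs_net s = map (fun l => nth l (cs_edges s) (0%nat, 1%nat)) (cs_pos s);
  coupled_realizes : realizes (cs_tree s) 0 1 (cs_edges s);
  coupled_leaves : leaves (cs_tree s) = n;
  coupled_fresh : forall v, In v (verts (cs_edges s)) -> (v <= n)%nat }.

Lemma coupled_start_ok : coupled 1 coupled_start.
Proof.
  split; cbn; auto.
  - constructor. lia.
  - intros v [<- | [<- | []]]; lia.
Qed.

Lemma coupled_grow_ok n s k b : coupled n s -> (k < n)%nat -> coupled (S n) (coupled_grow n s k b).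
Proof.
  intros [Hp Hg HR Ht Hv] Hk.
  assert (Hlen : length (cs_edges s) = n) by (rewrite (realizes_length _ _ _ _ HR); exact Ht).
  assert (Hj : (nth k (cs_pos s) 0%nat < n)%nat) by (apply (perm_seq_lt (cs_pos s)), nth_In;
    [exact Hp | rewrite (Permutation_length Hp), length_seq; exact Hk]).
  split; cbn.
  - apply pos_grow_perm; assumption.
  - apply grow_expand_edge; [rewrite Hlen | lia |]; assumption.
  - apply realizes_tgrow; [exact HR | lia |]. intros Hz. apply Hv in Hz. lia.
  - rewrite leaves_tgrow, Ht. reflexivity.
  - intros v Hin. apply verts_expand_edge in Hin as [-> | Hin]; [lia | apply Hv in Hin; lia | lia].
Qed.

Definition coupled_dist (p : R) (m : nat) : list (R * coupled_state) :=
  process p coupled_start coupled_grow m.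

Lemma coupled_dist_coupled p m qs : In qs (coupled_dist p m) -> coupled (S m) (snd qs).
Proof.
  apply process_invariant; [exact coupled_start_ok |].
  intros; apply coupled_grow_ok; assumption.
Qed.

Lemma fold_right_perm {A B : Type} (f : A -> B -> B) z l l' :
  (forall a b c, f a (f b c) = f b (f a c)) -> Permutation l l' ->
  fold_right f z l = fold_right f z l'.
Proof. intros Hc. induction 1; simpl; congruence. Qed.

Lemma npaths_perm h h' : Permutation h h' -> forall f v, npaths f v h = npaths f v h'.
Proof.
  intros Hp f. induction f as [|f IH]; intros v; [reflexivity|].
  rewrite !npaths_S. destruct (Nat.eqb v 1); [reflexivity|].
  assert (Hs : forall s, out_paths h f v s = out_paths h' f v s).
  { induction s as [|e s IHs]; [reflexivity|]. unfold out_paths in *. simpl.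
    rewrite IHs, IH. reflexivity. }
  rewrite Hs. unfold out_paths. apply fold_right_perm; [|exact Hp]. intros a b c.
  destruct (Nat.eqb (fst a) v), (Nat.eqb (fst b) v); lia.
Qed.

Lemma coupled_P n s : coupled n s -> P (cs_net s) = tpaths (cs_tree s).
Proof.
  intros [Hp Hg HR Ht _].
  assert (Hperm : Permutation (cs_net s) (cs_edges s)).
  { rewrite Hg, <- (map_nth_seq (cs_edges s) (0%nat, 1%nat)) at 1.
    apply Permutation_map. rewrite (realizes_length _ _ _ _ HR), Ht. exact Hp. }
  unfold P. rewrite (Permutation_length Hperm), (npaths_perm _ _ Hperm).
  apply realizes_npaths. exact HR.
Qed.

Lemma lsum_nth_perm (pos : list nat) n G : Permutation pos (seq 0 n) ->
  lsum (seq 0 n) (fun k => G (nth k pos 0%nat)) = lsum (seq 0 n) G.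
Proof.
  intros Hp.
  rewrite <- (lsum_map (seq 0 n) (fun k => nth k pos 0%nat) G), <- (lsum_perm _ _ G Hp).
  f_equal. rewrite <- (length_seq n 0), <- (Permutation_length Hp). apply map_nth_seq.
Qed.

Definition net_grow (n : nat) (g : network) (k : nat) (par : bool) : network := grow g k par (S n).

Lemma netdist_process p m : netdist p m = process p net1 net_grow m.
Proof. induction m as [|m IH]; [reflexivity|]. simpl. rewrite IH. reflexivity. Qed.

Lemma EP_tree_mean p m : EP p (S m) = tree_mean p m.
Proof.
  unfold EP. replace (S m - 1)%nat with m by lia.
  change (expect (netdist p m) (fun g => INR (P g)) = tree_mean p m).
  rewrite netdist_process.
  rewrite <- (expect_process_lump p coupled_start net1 coupled_grow net_grow cs_net
                                  (fun _ _ => True));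
    [| reflexivity | exact I | auto | reflexivity].
  transitivity (expect (coupled_dist p m) (fun s => INR (tpaths (cs_tree s)))).
  - apply expect_ext_in. intros qs Hqs. f_equal. apply (coupled_P (S m)).
    exact (coupled_dist_coupled p m qs Hqs).
  - refine (expect_process_lump p coupled_start Leaf coupled_grow tree_grow cs_tree coupled
              eq_refl coupled_start_ok _ _ m (fun t => INR (tpaths t)));
      [intros; apply coupled_grow_ok; assumption |].
    (* the grown leaf [nth k cs_pos] runs over all leaves as [k] runs over all edges *)
    intros n s F Hs. unfold grow_mean. f_equal. cbn [cs_tree coupled_grow].
    apply (lsum_nth_perm (cs_pos s) n (fun j => p * F (tgrow (cs_tree s) j true)
                                             + (1 - p) * F (tgrow (cs_tree s) j false))).
    apply Hs.
Qed.

Lemma EP_1 p : EP p 1 = 1.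
Proof. rewrite (EP_tree_mean p 0). apply tree_mean_0. Qed.

Lemma EP_rec p n : (2 <= n)%nat ->
  EP p n = 2 * p / INR (n - 1) * sum_f 1 (n - 1) (fun k => EP p k)
         + (1 - p) / INR (n - 1) * sum_f 1 (n - 1) (fun k => EP p k * EP p (n - k)).
Proof.
  intros Hn. destruct n as [|[|n]]; [lia | lia |].
  replace (S (S n) - 1)%nat with (S n) by lia.
  rewrite EP_tree_mean, tree_mean_rec. unfold sum_f. replace (S n - 1)%nat with n by lia.
  rewrite !sum_f_R0_lsum.
  rewrite (lsum_ext_in _ (fun x => EP p (x + 1)) (tree_mean p))
    by (intros x _; rewrite Nat.add_1_r; apply EP_tree_mean).
  rewrite (lsum_ext_in _ (fun x => EP p (x + 1) * EP p (S (S n) - (x + 1)))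
                         (fun k => tree_mean p k * tree_mean p (n - k))).
  - unfold Rdiv. ring.
  - intros x Hx. apply in_seq in Hx. rewrite Nat.add_1_r.
    replace (S (S n) - S x)%nat with (S (n - x)) by lia. rewrite !EP_tree_mean. reflexivity.
Qed.

Lemma tree_mean_bounds p : 0 <= p <= 1 -> forall m, 0 <= tree_mean p m <= 2 ^ m.
Proof.
  intros hp m. induction m as [m IH] using (well_founded_induction lt_wf).
  destruct m as [|n]; [rewrite tree_mean_0; simpl; lra|].
  assert (H2n : 0 <= 2 ^ n) by (apply pow_le; lra).
  assert (Hlin : forall k, In k (seq 0 (S n)) -> 0 <= tree_mean p k <= 2 ^ n).
  { intros k Hk. apply in_seq in Hk. destruct (IH k) as [H1 H2]; [lia|].
    split; [exact H1|]. apply Rle_trans with (2 ^ k); [exact H2 | apply Rle_pow; [lra | lia]]. }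
  assert (Hquad : forall k, In k (seq 0 (S n)) ->
                    0 <= tree_mean p k * tree_mean p (n - k) <= 2 ^ n).
  { intros k Hk. apply in_seq in Hk. destruct (IH k) as [H1 H2]; [lia|].
    destruct (IH (n - k)%nat) as [H3 H4]; [lia|]. split; [nra|].
    replace (2 ^ n) with (2 ^ k * 2 ^ (n - k)) by (rewrite <- pow_add; f_equal; lia).
    apply Rmult_le_compat; assumption. }
  apply lsum_bounds in Hlin, Hquad. rewrite length_seq in Hlin, Hquad.
  assert (HI : 0 < INR (S n)) by (apply lt_0_INR; lia).
  rewrite tree_mean_rec. simpl (2 ^ S n).
  split; [apply Rmult_le_pos; [left; apply Rinv_0_lt_compat; exact HI | nra]|].
  apply Rle_trans with (/ INR (S n) * (INR (S n) * (2 * 2 ^ n))); [|right; field; lra].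
  apply Rmult_le_compat_l; [left; apply Rinv_0_lt_compat; exact HI | nra].
Qed.

(** * The generating function *)

Lemma lt_CV_radius_pow2 (u : nat -> R) M z :
  (forall n, Rabs (u n) <= M * 2 ^ n) -> Rabs z < 1/3 -> Rbar_lt (Rabs z) (CV_radius u).
Proof.
  intros H Hz. apply (Rbar_lt_le_trans _ (Finite (1/3))); [exact Hz|].
  apply (proj1 (Lub_Rbar_correct (CV_disk u))).
  apply (@ex_series_le R_AbsRing R_CompleteNormedModule _ (fun n => M * (2/3) ^ n)).
  - intros n. change (norm (Rabs (u n * (1/3) ^ n))) with (Rabs (Rabs (u n * (1/3) ^ n))).
    rewrite Rabs_Rabsolu, Rabs_mult, (Rabs_pos_eq ((1/3) ^ n)) by (apply pow_le; lra).
    replace ((2/3) ^ n) with (2 ^ n * (1/3) ^ n) by (rewrite <- Rpow_mult_distr; f_equal; lra).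
    rewrite <- Rmult_assoc. apply Rmult_le_compat_r; [apply pow_le; lra | apply H].
  - apply (@ex_series_scal R_AbsRing R_CompleteNormedModule M (fun n => (2/3) ^ n)).
    apply ex_series_geom. rewrite Rabs_pos_eq; lra.
Qed.

Lemma linear_ode_zero (y g A : R -> R) r z :
  (forall t, Rabs t < r -> is_derive y t (g t * y t) /\ is_derive A t (g t)) ->
  y 0 = 0 -> Rabs z < r -> y z = 0.
Proof.
  intros Hd H0 Hz.
  set (phi := fun t => y t * exp (- A t)).
  assert (Hphi : forall t, Rabs t < r -> is_derive phi t 0).
  { intros t Ht. destruct (Hd t Ht) as [Hy HA].
    assert (He : is_derive (fun t => exp (- A t)) t (- g t * exp (- A t)))
      by exact (is_derive_comp exp (fun t => - A t) t _ _
                  (is_derive_exp _) (is_derive_opp _ _ _ HA)).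
    replace 0 with (g t * y t * exp (- A t) + y t * (- g t * exp (- A t))) by ring.
    exact (is_derive_mult y (fun t => exp (- A t)) t _ _ Hy He Rmult_comm). }
  assert (Hz0 : phi z = phi 0).
  { apply Rabs_def2 in Hz.
    destruct (Rtotal_order z 0) as [Hlt | [-> | Hgt]]; [| reflexivity |].
    - apply eq_is_derive; [|exact Hlt]. intros t Ht. apply Hphi, Rabs_def1; lra.
    - symmetry. apply eq_is_derive; [|exact Hgt]. intros t Ht. apply Hphi, Rabs_def1; lra. }
  unfold phi in Hz0. rewrite H0, Rmult_0_l in Hz0.
  apply Rmult_integral in Hz0 as [Hz0 | Hz0]; [exact Hz0|].
  exfalso. exact (Rgt_not_eq _ _ (exp_pos _) Hz0).
Qed.

Lemma eq_div_of_mul_eq x d k : x * d = k -> k <> 0 -> x = k / d.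
Proof.
  intros H Hk. assert (Hd : d <> 0) by (intros ->; apply Hk; rewrite <- H; ring).
  rewrite <- H. field. exact Hd.
Qed.

Section GeneratingFunction.
Variable p : R.
Hypothesis hp : 0 < p < 1.

Let E := PSeries (tree_mean p).

Lemma tree_mean_abs_bound n : Rabs (tree_mean p n) <= 1 * 2 ^ n.
Proof.
  destruct (tree_mean_bounds p ltac:(lra) n). rewrite Rabs_pos_eq; lra.
Qed.

Lemma partial_sum_abs_bound n : Rabs (sum_f_R0 (tree_mean p) n) <= 2 * 2 ^ n.
Proof.
  assert (H : 0 <= sum_f_R0 (tree_mean p) n <= 2 * 2 ^ n - 1).
  { induction n as [|n IH]; simpl sum_f_R0.
    - destruct (tree_mean_bounds p ltac:(lra) 0). simpl in *. lra.
    - destruct (tree_mean_bounds p ltac:(lra) (S n)). simpl in *. lra. }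
  rewrite Rabs_pos_eq; lra.
Qed.

Lemma PS_derive_tree_mean n :
  PS_derive (tree_mean p) n
  = 2 * p * sum_f_R0 (tree_mean p) n + (1 - p) * PS_mult (tree_mean p) (tree_mean p) n.
Proof.
  unfold PS_derive, PS_mult. rewrite tree_mean_rec, !sum_f_R0_lsum.
  field. apply not_0_INR. lia.
Qed.

Lemma gf_derive t : Rabs t < 1/3 ->
  is_derive E t (2 * p * E t / (1 - t) + (1 - p) * (E t * E t)).
Proof.
  intros Ht.
  assert (Ra := lt_CV_radius_pow2 _ _ t tree_mean_abs_bound Ht).
  assert (Rc := lt_CV_radius_pow2 _ _ t partial_sum_abs_bound Ht).
  assert (Ha : is_pseries (tree_mean p) t (E t)) by (apply PSeries_correct, CV_radius_inside, Ra).
  set (c := sum_f_R0 (tree_mean p)).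
  assert (Hc : is_pseries c t (PSeries c t)) by (apply PSeries_correct, CV_radius_inside, Rc).
  assert (Hct : PSeries c t * (1 - t) = E t).
  { symmetry. apply is_pseries_unique.
    apply (is_pseries_ext (PS_minus c (PS_incr_1 c))).
    - intros [|n]; unfold PS_minus, PS_incr_1, c, plus, opp, zero; simpl; ring.
    - replace (PSeries c t * (1 - t)) with (plus (PSeries c t) (opp (scal t (PSeries c t))))
        by (unfold plus, opp, scal; simpl; unfold mult; simpl; ring).
      exact (is_pseries_minus _ _ _ _ _ Hc (is_pseries_incr_1 _ _ _ Hc)). }
  assert (Ht1 : 1 - t <> 0) by (apply Rabs_def2 in Ht; lra).
  replace (2 * p * E t / (1 - t) + (1 - p) * (E t * E t))
    with (PSeries (PS_derive (tree_mean p)) t).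
  - apply is_derive_PSeries, Ra.
  - apply is_pseries_unique.
    apply (is_pseries_ext (PS_plus (PS_scal (2 * p) c)
                                   (PS_scal (1 - p) (PS_mult (tree_mean p) (tree_mean p))))).
    { intros n. symmetry. apply PS_derive_tree_mean. }
    replace (2 * p * E t / (1 - t)) with (2 * p * PSeries c t)
      by (rewrite <- Hct; field; exact Ht1).
    apply (@is_pseries_plus R_AbsRing R_NormedModule);
      apply (@is_pseries_scal R_AbsRing R_NormedModule); try apply Rmult_comm.
    + exact Hc.
    + apply is_pseries_mult; assumption.
Qed.

Lemma gf_antiderivative t : Rabs t < 1/3 -> is_derive (PSeries (PS_Int (tree_mean p))) t (E t).
Proof.
  intros Ht.
  assert (Ra := lt_CV_radius_pow2 _ _ t tree_mean_abs_bound Ht).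
  replace (E t) with (PSeries (PS_derive (PS_Int (tree_mean p))) t).
  - apply is_derive_PSeries. rewrite CV_radius_Int. exact Ra.
  - apply PSeries_ext. intros n. unfold PS_derive, PS_Int. field. apply not_0_INR. lia.
Qed.

(* If [D] solves [2p D / (1 - t) + D' = -(1 - p) kappa], then [y = E D - kappa]
   satisfies the linear equation [y' = (1 - p) E y]. *)
Lemma gf_mul_denominator (D D' : R -> R) kappa z :
  (forall t, Rabs t < 1/3 ->
     is_derive D t (D' t) /\ 2 * p * D t / (1 - t) + D' t = - (1 - p) * kappa) ->
  D 0 = kappa -> Rabs z < 1/3 -> E z * D z = kappa.
Proof.
  intros HD H0 Hz. apply Rminus_diag_uniq.
  apply (linear_ode_zero (fun t => E t * D t - kappa) (fun t => (1 - p) * E t)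
           (fun t => (1 - p) * PSeries (PS_Int (tree_mean p)) t) (1/3)); [| | exact Hz].
  - intros t Ht. destruct (HD t Ht) as [HDt Hid].
    assert (Ht1 : 1 - t <> 0) by (apply Rabs_def2 in Ht; lra).
    split; [| apply (is_derive_scal (PSeries (PS_Int (tree_mean p)))), gf_antiderivative, Ht].
    replace ((1 - p) * E t * (E t * D t - kappa))
      with (minus ((2 * p * E t / (1 - t) + (1 - p) * (E t * E t)) * D t + E t * D' t) zero).
    + exact (is_derive_minus (fun t => E t * D t) (fun _ => kappa) t _ zero
               (is_derive_mult E D t _ _ (gf_derive t Ht) HDt Rmult_comm)
               (is_derive_const kappa t)).
    + replace (D' t) with (- (1 - p) * kappa - 2 * p * D t / (1 - t)) by lra.
      unfold minus, plus, opp, zero; simpl. field. exact Ht1.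
  - unfold E. rewrite PSeries_0, tree_mean_0, H0. ring.
Qed.

Lemma gf_closed_form z : Rabs z < 1/3 -> E z = Egf p z.
Proof.
  intros Hz. unfold Egf. destruct (Req_EM_T p (1/2)) as [Hp | Hp]; apply eq_div_of_mul_eq.
  - apply (gf_mul_denominator (fun t => 2 * (1 - t) - (1 - t) * ln (1 / (1 - t)))
                              (fun t => -3 + ln (1 / (1 - t)))); [| | exact Hz].
    + intros t Ht. assert (Ht1 : 0 < 1 - t) by (apply Rabs_def2 in Ht; lra). split.
      * auto_derive; [repeat split; try lra; apply Rdiv_lt_0_compat; lra |].
        replace (1 * / (1 + - t)) with (1 / (1 - t)) by (field; lra). field. lra.
      * subst p. field. lra.
    + replace (1 / (1 - 0)) with 1 by field. rewrite ln_1. ring.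
  - lra.
  - apply (gf_mul_denominator (fun t => (1 - p) * (1 - t) - p * Rpower (1 - t) (2 * p))
             (fun t => - (1 - p) + 2 * p * p * Rpower (1 - t) (2 * p) / (1 - t))); [| | exact Hz].
    + intros t Ht. assert (Ht1 : 0 < 1 - t) by (apply Rabs_def2 in Ht; lra). split.
      * unfold Rpower. auto_derive; [repeat split; lra |].
        replace (1 + - t) with (1 - t) by ring. field. lra.
      * field. lra.
    + unfold Rpower. replace (1 - 0) with 1 by ring. rewrite ln_1, Rmult_0_r, exp_0. ring.
  - intros Hk. apply Hp. lra.
Qed.

Lemma EP_series z : Rabs z < 1/3 -> infinite_sum (fun m => EP p (S m) * z ^ m) (Egf p z).
Proof.
  intros Hz. rewrite <- (gf_closed_form z Hz). apply is_series_Reals.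
  apply (is_series_ext (fun m => tree_mean p m * z ^ m)).
  { intros m. rewrite EP_tree_mean. reflexivity. }
  apply is_pseries_R, PSeries_correct, CV_radius_inside.
  exact (lt_CV_radius_pow2 _ _ z tree_mean_abs_bound Hz).
Qed.

End GeneratingFunction.

Theorem mainTheorem4 (p : R) (hp : 0 < p < 1) :
  EP p 1 = 1 /\
  (forall n : nat, (2 <= n)%nat ->
     EP p n = 2 * p / INR (n - 1) * sum_f 1 (n - 1) (fun k => EP p k)
            + (1 - p) / INR (n - 1) * sum_f 1 (n - 1) (fun k => EP p k * EP p (n - k))) /\
  (exists r : R, 0 < r /\ forall z : R, Rabs z < r ->
     infinite_sum (fun m : nat => EP p (S m) * z ^ m) (Egf p z)).
Proof.
  split; [apply EP_1 |]. split; [apply EP_rec |].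
  exists (1/3). split; [lra |]. apply EP_series, hp.
Qed.
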